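(* Let $a\in\mathbb{C}_p$, $a\ne0$, $A=|a|_p$, and $f(x)=\frac{ax}{x^2+a}$. If $y_0,y_1,\dots,y_k\in\mathbb{C}_p\setminus\{\pm\sqrt{-a}\}$ form a periodic orbit of $f$, i.e. $f(y_i)=y_{i+1}$ for $0\le i<k$ and $f(y_k)=y_0$, then $$|y_0|_p=|y_1|_p=\dots=|y_k|_p\le\sqrt A.$$ *)

From HB Require Import structures.
From mathcomp Require Import all_boot all_order all_algebra.
Set Implicit Arguments. Unset Strict Implicit. Unset Printing Implicit Defensive.
Import Order.TTheory GRing.Theory Num.Theory.
Local Open Scope ring_scope.

Definition nonarch_abs (K : fieldType) (R : realFieldType) (abs : K -> R) : Prop :=
  [/\ forall x, 0 <= abs x,
      forall x, abs x = 0 <-> x = 0,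
      forall x y, abs (x * y) = abs x * abs y
    & forall x y, abs (x + y) <= Num.max (abs x) (abs y)].

Definition abs_complete (K : fieldType) (R : realFieldType) (abs : K -> R) : Prop :=
  forall u : nat -> K,
    (forall eps : R, 0 < eps -> exists N, forall m n, (N <= m)%N -> (N <= n)%N ->
        abs (u m - u n) < eps) ->
    exists l : K, forall eps : R, 0 < eps -> exists N, forall n, (N <= n)%N ->
        abs (u n - l) < eps.

Definition Cp_like (p : nat) (K : closedFieldType) (R : rcfType) (abs : K -> R) : Prop :=
  [/\ prime p, nonarch_abs abs, abs_complete abs & abs (p%:R) = (p%:R)^-1].

Definition fa (K : fieldType) (a x : K) : K := a * x / (x ^+ 2 + a).

(* Only the ultrametric inequality matters.  Write A = |a|.  If |x|^2 < A, the
   denominator x^2 + a has absolute value A, so |f(x)| = |x|; if |x|^2 > A it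
   has absolute value |x|^2, so |f(x)| = A / |x| and |f(x)|^2 < A.  Along a
   cycle, a point with |y_i|^2 < A therefore forces the whole cycle to have
   the constant absolute value |y_i|; if there is no such point, every point
   must satisfy |y_i|^2 = A, since a point with |y_i|^2 > A would be followed
   by one with |y_(i+1)|^2 < A. *)
From HB Require Import structures.
From mathcomp Require Import all_boot all_order all_algebra.
From mathcomp Require Import lra.
Set Implicit Arguments. Unset Strict Implicit. Unset Printing Implicit Defensive.
Import Order.TTheory GRing.Theory Num.Theory.
Local Open Scope ring_scope.

Section NonArchimedeanAbs.
Variables (K : fieldType) (R : realFieldType) (abs : K -> R).
Hypothesis abs_nonarch : nonarch_abs abs.

Lemma abs_ge0 x : 0 <= abs x.
Proof. by case: abs_nonarch. Qed.

Lemma abs_eq0 x : abs x = 0 <-> x = 0.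
Proof. by case: abs_nonarch. Qed.

Lemma absM x y : abs (x * y) = abs x * abs y.
Proof. by case: abs_nonarch. Qed.

Lemma absD_le_max x y : abs (x + y) <= Num.max (abs x) (abs y).
Proof. by case: abs_nonarch. Qed.

Lemma abs_gt0 x : (0 < abs x) = (x != 0).
Proof.
rewrite lt_def abs_ge0 andbT; apply/idP/idP; apply: contra_neq.
  by move=> ->; apply/abs_eq0.
by move/abs_eq0.
Qed.

Lemma abs1 : abs 1 = 1.
Proof.
have abs1_gt0 : 0 < abs 1 by rewrite abs_gt0 oner_eq0.
apply: (mulfI (lt0r_neq0 abs1_gt0)).
by rewrite -absM !mulr1.
Qed.

Lemma absN x : abs (- x) = abs x.
Proof.
have absN1 : abs (-1) = 1.
  have sq := absM (-1) (-1); rewrite mulrNN mulr1 abs1 in sq.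
  have := abs_ge0 (-1); nra.
by rewrite -mulN1r absM absN1 mul1r.
Qed.

Lemma absV x : x != 0 -> abs x^-1 = (abs x)^-1.
Proof.
move=> x_neq0; have absx_neq0 : abs x != 0 by rewrite lt0r_neq0 ?abs_gt0.
by apply: (mulfI absx_neq0); rewrite -absM !mulfV ?abs1.
Qed.

Lemma absX x n : abs (x ^+ n) = abs x ^+ n.
Proof. by elim: n => [|n IHn]; rewrite ?abs1 // !exprS absM IHn. Qed.

Lemma absD_ltr x y : abs x < abs y -> abs (x + y) = abs y.
Proof.
move=> lt_xy; apply/eqP; rewrite eq_le; apply/andP; split.
  by have := absD_le_max x y; rewrite (max_idPr (ltW lt_xy)).
have := absD_le_max (x + y) (- x); rewrite addrC addKr absN.
rewrite /Num.max; case: ifP => // _ le_yx.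
by have := lt_le_trans lt_xy le_yx; rewrite ltxx.
Qed.

Lemma abs_fa a x : x ^+ 2 + a != 0 -> abs (fa a x) = abs a * abs x / abs (x ^+ 2 + a).
Proof. by move=> den_neq0; rewrite /fa !absM absV. Qed.

Lemma abs_fa_small a x : x ^+ 2 + a != 0 -> abs x ^+ 2 < abs a -> abs (fa a x) = abs x.
Proof.
move=> den_neq0 small; have a_gt0 : 0 < abs a by have := abs_ge0 x; nra.
by rewrite abs_fa // absD_ltr ?absX // [abs a * _]mulrC mulfK ?gt_eqF.
Qed.

Lemma abs_fa_large a x : a != 0 -> x ^+ 2 + a != 0 -> abs a < abs x ^+ 2 ->
  abs (fa a x) ^+ 2 < abs a.
Proof.
move=> a_neq0 den_neq0 large; rewrite abs_fa // addrC absD_ltr ?absX //.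
have a_gt0 : 0 < abs a by rewrite abs_gt0.
have x_gt0 : 0 < abs x by have := abs_ge0 x; nra.
have -> : abs a * abs x / abs x ^+ 2 = abs a / abs x.
  by rewrite expr2 invfM mulrA mulfK ?gt_eqF.
rewrite expr_div_n ltr_pdivrMr ?exprn_gt0 //; nra.
Qed.

End NonArchimedeanAbs.

Lemma cycle_step_modn (T : Type) (f : T -> T) (k : nat) (y : nat -> T) :
  (forall i, (i < k)%N -> f (y i) = y i.+1) -> f (y k) = y 0%N ->
  forall n, f (y (n %% k.+1)%N) = y (n.+1 %% k.+1)%N.
Proof.
move=> step close n; rewrite -[n.+1]addn1 -modnDml addn1.
have : (n %% k.+1 <= k)%N by rewrite -ltnS ltn_mod.
move: (n %% k.+1)%N => i; rewrite leq_eqVlt => /orP[/eqP-> | lt_ik].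
  by rewrite modnn close.
by rewrite modn_small ?step.
Qed.

Section PeriodicThreshold.
Variables (R : realDomainType) (A : R) (N : nat) (w : nat -> R).
Hypothesis N_gt0 : (0 < N)%N.
Hypothesis w_periodic : forall n, w (n + N) = w n.
Hypothesis w_below : forall n, w n < A -> w n.+1 = w n.
Hypothesis w_above : forall n, A < w n -> w n.+1 < A.

Lemma periodicM m j : w (m + j * N) = w m.
Proof. by elim: j => [|j IHj]; rewrite ?addn0 // mulSn addnCA addnC w_periodic. Qed.

Lemma below_forward n d : w n < A -> w (n + d) = w n.
Proof.
move=> below; elim: d => [|d IHd]; first by rewrite addn0.
by rewrite addnS w_below IHd.
Qed.

Lemma below_const n m : w n < A -> w m = w n.
Proof.
move=> below; rewrite -(periodicM m n).
have le_n : (n <= m + n * N)%N by rewrite (leq_trans (leq_pmulr n N_gt0)) ?leq_addl.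
by rewrite -(subnKC le_n) below_forward.
Qed.

Lemma periodic_threshold_const : (forall n, w n = w 0%N) /\ w 0%N <= A.
Proof.
have [below | not_below] := ltP (w 0%N) A.
  by split=> [n|]; [apply: below_const | apply: ltW].
have ge_A n : A <= w n.
  rewrite leNgt; apply/negP => below.
  by move: not_below; rewrite (below_const 0 below) leNgt below.
suff eq_A n : w n = A by split=> [n|]; rewrite !eq_A.
apply/eqP; rewrite eq_le ge_A andbT leNgt; apply/negP => /w_above.
by rewrite ltNge ge_A.
Qed.

End PeriodicThreshold.

Theorem proposition4p1 (p : nat) (K : closedFieldType) (R : rcfType) (abs : K -> R)
  (hK : Cp_like p abs) (a : K) (ha : a != 0) (k : nat) (y : nat -> K)
  (hnot : forall i, (i <= k)%N -> forall s : K, s ^+ 2 = - a -> y i != s)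
  (horb : forall i, (i < k)%N -> fa a (y i) = y i.+1)
  (hcl : fa a (y k) = y 0%N) :
  (forall i, (i <= k)%N -> abs (y i) = abs (y 0%N)) /\
  abs (y 0%N) <= Num.sqrt (abs a).
Proof.
case: hK => _ abs_nonarch _ _.
have step := cycle_step_modn horb hcl.
have den_neq0 n : y (n %% k.+1)%N ^+ 2 + a != 0.
  have mod_le : (n %% k.+1 <= k)%N by rewrite -ltnS ltn_mod.
  by rewrite addr_eq0; apply/eqP => /(hnot _ mod_le); rewrite eqxx.
pose w n := abs (y (n %% k.+1)%N) ^+ 2.
have [w_const w0_le] : (forall n, w n = w 0%N) /\ w 0%N <= abs a.
  apply: (@periodic_threshold_const _ _ k.+1) => // n; rewrite /w.
  - by rewrite modnDr.
  - by move=> small; rewrite -step abs_fa_small.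
  - by rewrite -step; apply: abs_fa_large.
have w_orbit i : (i <= k)%N -> w i = abs (y i) ^+ 2 by move=> le_ik; rewrite /w modn_small.
split=> [i le_ik|].
  by apply/eqP; rewrite -(eqrXn2 (n := 2)) ?(abs_ge0 abs_nonarch) // -!w_orbit ?w_const.
rewrite -(ger0_norm (abs_ge0 abs_nonarch (y 0%N))) -sqrtr_sqr.
by apply: ler_wsqrtr; rewrite -w_orbit.
Qed.
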